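(* Let $H$ be a tree of order at least two. Then $S_2(H)$ (for any function $\alpha$) is a DPDP-tree. Moreover, $S_2(H)$ is not a minimal DPDP-tree if and only if there is a tree $Q$ in $H-(L_H\cup S_H)$ such that $Q\circ K_1$ is a subtree of $H-L_H$ and $d_H(x)=d_Q(x)+1$ for each vertex $x$ of $Q$.
   Context: Graphs are finite. A leaf is a vertex of degree one; a support vertex is a vertex adjacent to a leaf; $L_H$ and $S_H$ denote the sets of leaves and of support vertices of $H$. The corona $Q\circ K_1$ is obtained from $Q$ by attaching one pendant edge to each vertex of $Q$; ''$Q\circ K_1$ is a subtree of $H-L_H$'' means that $H-L_H$ contains $Q$ together with, for each vertex of $Q$, a distinct additional neighbor outside $Q$, forming a copy of $Q\circ K_1$. A set $D\subseteq V(G)$ is dominating if every vertex outside $D$ has a neighbor in $D$; $P$ is paired-dominating if it is dominating and the subgraph induced by $P$ has a perfect matching. A DPDP-graph (DPDP-tree if a tree) is a graph $G$ admitting disjoint sets $D,P$ with $V(G)=D\cup P$, $D$ dominating and $P$ paired-dominating; a minimal DPDP-graph is a DPDP-graph no proper spanning subgraph of which is a DPDP-graph. 2-subdivision graph: for a graph $H$ with no isolated vertex and $\alpha:L_H\to\mathbb{N}=\{1,2,\dots\}$, $S_2(H)$ has vertex set $(V_H\setminus L_H)\cup\{(v,i): v\in L_H, 1\le i\le \alpha(v)\}$ together with two new vertices $u_e,v_e$ for each edge $e=uv$ of $H$. Its edges are: $u_ev_e$ for each edge $e=uv$; for $v\in V_H\setminus L_H$, $vv_e$ for each edge $e$ at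 $v$; for $v\in L_H$ with incident edge $e$, the edges $v_e(v,i)$, $1\le i\le\alpha(v)$. *)

From mathcomp Require Import all_boot.
Set Implicit Arguments. Unset Strict Implicit. Unset Printing Implicit Defensive.

Section Graphs.
Variable T : finType.

Definition sgraph (V : {set T}) (e : rel T) : Prop :=
  [/\ symmetric e, irreflexive e & forall x y, e x y -> (x \in V) && (y \in V)].

Definition deg (V : {set T}) (e : rel T) (x : T) : nat := #|[set y in V | e x y]|.

Definition is_leaf (V : {set T}) (e : rel T) (x : T) : bool :=
  (x \in V) && (deg V e x == 1).

Definition is_support (V : {set T}) (e : rel T) (x : T) : bool :=
  (x \in V) && [exists y, e x y && is_leaf V e y].

Definition connected (V : {set T}) (e : rel T) : Prop :=
  V != set0 /\ {in V &, forall x y, connect e x y}.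

Definition acyclic (e : rel T) : Prop :=
  forall s : seq T, uniq s -> 2 < size s -> ~~ cycle e s.

Definition is_tree (V : {set T}) (e : rel T) : Prop :=
  [/\ sgraph V e, connected V e & acyclic e].

Definition dominating (V : {set T}) (e : rel T) (D : {set T}) : Prop :=
  D \subset V /\ forall x, x \in V -> x \notin D -> exists2 y, y \in D & e x y.

(* P dominating and G[P] has a perfect matching m (an involution without
   fixed points on P along edges) *)
Definition paired_dominating (V : {set T}) (e : rel T) (P : {set T}) : Prop :=
  dominating V e P /\
  exists m : T -> T, forall x, x \in P ->
    [/\ m x \in P, m x != x, m (m x) = x & e x (m x)].

Definition DPDP (V : {set T}) (e : rel T) : Prop :=
  exists D P : {set T}, [/\ D :&: P = set0, D :|: P = V,
                            dominating V e D & paired_dominating V e P].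

Definition minimal_DPDP (V : {set T}) (e : rel T) : Prop :=
  DPDP V e /\
  forall e' : rel T, symmetric e' -> subrel e' e ->
    (exists x y, e x y && ~~ e' x y) -> ~ DPDP V e'.

End Graphs.

(* The 2-subdivision graph S_2(H) of H = ([set: T], e) with multiplicities
   alpha (only used on leaves).  Vertices:
   - inl (inl v)        : original vertex v (v not a leaf)
   - inl (inr (u, v))   : subdivision vertex u_e of the edge e = uv
   - inr (existT v i)   : the copy (v, i+1) of a leaf v, i < alpha v *)
Section S2.
Variables (T : finType) (e : rel T) (alpha : T -> nat).

Definition S2T : finType := ((T + (T * T)) + {v : T & 'I_(alpha v)})%type.

Definition leafH (v : T) := is_leaf [set: T] e v.

Definition S2valid (x : S2T) : bool :=
  match x with
  | inl (inl v) => ~~ leafH v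
  | inl (inr (u, v)) => e u v
  | inr (existT v _) => leafH v
  end.

Definition S2V : {set S2T} := [set x | S2valid x].

Definition S2e0 (x y : S2T) : bool :=
  match x, y with
  | inl (inr (u, v)), inl (inr (u', v')) => [&& e u v, u' == v & v' == u]
  | inl (inl u), inl (inr (u', v)) => [&& ~~ leafH u, u' == u & e u v]
  | inl (inr (v, u)), inr (existT v' _) => [&& leafH v, v' == v & e v u]
  | _, _ => false
  end.

Definition S2e : rel S2T := fun x y => S2e0 x y || S2e0 y x.

End S2.

Arguments S2V {T} e alpha.
Arguments S2e {T} e alpha.

From mathcomp Require Import all_boot.
From Stdlib Require Import Classical.
Set Implicit Arguments. Unset Strict Implicit. Unset Printing Implicit Defensive.

(* Both directions go through a local form of the corona condition,
   [corona_frame Q f]: every neighbour of [x \in Q] other than [f x] lies in [Q].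
   Given a frame, put into P the vertices of [Q] and the subdivision vertices [u_e]
   of the edges [e = uv] with [v \notin Q], and everything else into D; [x \in Q] is
   paired with [x_e] for [e = x (f x)], the other vertices of P with their twins.
   This DPDP partition uses no edge between two vertices of D: for [Q] empty it shows
   that S_2(H) is a DPDP-tree, and for [Q] nonempty the middle edge of an edge of [Q]
   can be deleted.  Conversely, for a DPDP partition (D, P) of a proper spanning
   subgraph, the original vertices [x] in P, with [f x] the far end of the
   subdivision vertex paired with [x], have the frame closure property, and there is
   at least one, since otherwise every edge of S_2(H) would be forced.  A minimal
   nonempty closed subset is connected, and acyclicity of H makes [f] injective with
   [f x] outside it: this is the tree [Q]. *)

Notation Orig alpha x := (@inl _ {w_ : _ & 'I_(alpha w_)} (@inl _ (_ * _) x)).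
Notation Subd alpha u v := (@inl _ {w_ : _ & 'I_(alpha w_)} (@inr _ (_ * _) (u, v))).
Notation Copy alpha v i := (@inr (_ + (_ * _)) {w_ : _ & 'I_(alpha w_)} (existT _ v i)).

Section S2Edges.
Variables (T : finType) (e : rel T) (alpha : T -> nat).
Hypothesis esym : symmetric e.

Notation leaf := (leafH e).
Notation G := (S2e e alpha).

Lemma S2e_sym : symmetric G.
Proof. by move=> x y; rewrite /S2e orbC. Qed.

Lemma S2e_OrigP x y :
  G (Orig alpha x) y -> ~~ leaf x /\ exists2 v, e x v & y = Subd alpha x v.
Proof.
case: y => [[y|[a b]]|[w j]] //; rewrite /S2e /= ?orbF // => /and3P [nl /eqP -> xb].
by split => //; exists b.
Qed.

Lemma S2e_CopyP v i y :
  G (Copy alpha v i) y -> leaf v /\ exists2 u, e v u & y = Subd alpha v u.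
Proof.
case: y => [[y|[a b]]|[w j]] //; rewrite /S2e /= // => /and3P [lv /eqP -> vb].
by split => //; exists b.
Qed.

Lemma S2e_SubdP u v y : G (Subd alpha u v) y -> e u v /\
  [\/ y = Subd alpha v u, y = Orig alpha u /\ ~~ leaf u
    | leaf u /\ exists i, y = Copy alpha u i].
Proof.
case: y => [[y|[a b]]|[w j]] /=; rewrite /S2e /=.
- by move=> /and3P [nl /eqP -> uv]; split => //; apply: Or32.
- case/orP => /and3P [uv /eqP -> /eqP ->]; split => //; try by apply: Or31.
  by rewrite esym.
- rewrite orbF => /and3P [lu /eqP wu uv]; subst w.
  by split => //; apply: Or33; split => //; exists j.
Qed.

Lemma S2e_OrigSubd x v : ~~ leaf x -> e x v -> G (Orig alpha x) (Subd alpha x v).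
Proof. by move=> nl xv; rewrite /S2e /= nl eqxx xv. Qed.

Lemma S2e_SubdSubd u v : e u v -> G (Subd alpha u v) (Subd alpha v u).
Proof. by move=> uv; rewrite /S2e /= uv !eqxx. Qed.

Lemma S2e_SubdCopy u v i : leaf u -> e u v -> G (Subd alpha u v) (Copy alpha u i).
Proof. by move=> lu uv; rewrite /S2e /= lu eqxx uv. Qed.

Lemma S2V_Orig x : (Orig alpha x \in S2V e alpha) = ~~ leaf x.
Proof. by rewrite inE. Qed.

Lemma S2V_Subd u v : (Subd alpha u v \in S2V e alpha) = e u v.
Proof. by rewrite inE. Qed.

End S2Edges.

Section GraphFacts.
Variables (T : finType) (e : rel T).

Notation leaf := (leafH e).

Lemma leaf_nbr_uniq v u w : leaf v -> e v u -> e v w -> u = w.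
Proof.
rewrite /leafH /is_leaf /deg in_setT => /cards1P [x Nv] vu vw.
have : u \in [set y in [set: T] | e v y] by rewrite inE in_setT vu.
have : w \in [set y in [set: T] | e v y] by rewrite inE in_setT vw.
by rewrite Nv !inE => /eqP -> /eqP ->.
Qed.

Lemma nonleaf_other_nbr (nbr : forall v, exists u, e v u) v u :
  ~~ leaf v -> exists2 w, e v w & w != u.
Proof.
move=> nl; case: (boolP [exists w, e v w && (w != u)]).
  by case/existsP => w /andP [vw wu]; exists w.
rewrite negb_exists => /forallP only_u; case/negP: nl.
rewrite /leafH /is_leaf in_setT /deg; apply/cards1P; exists u.
have [w vw] := nbr v.
apply/setP => y; rewrite !inE /=; apply/idP/idP.
  by move=> vy; move: (only_u y); rewrite vy /= negbK.
by move/eqP ->; move: (only_u w); rewrite vw /= negbK => /eqP <-.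
Qed.

Lemma tree_nbr : is_tree [set: T] e -> 1 < #|T| -> forall v, exists u, e v u.
Proof.
move=> [_ [_ conn] _] /card_gt1P [a [b [_ _ ab]]] v.
have [w wv] : exists w, w != v.
  by case: (eqVneq a v) => [<-|av]; [exists b; rewrite eq_sym | exists a].
case/connectP: (conn v w (in_setT _) (in_setT _)) => [[|y p]] /=.
  by move=> _ wv'; rewrite wv' eqxx in wv.
by case/andP => vy _ _; exists y.
Qed.

Lemma acyclic_closing_path : acyclic e -> forall a p,
  path e a p -> uniq (a :: p) -> 1 < size p -> ~~ e (last a p) a.
Proof.
move=> acyc a p pth un sz; apply/negP => closing.
by have /negP := acyc _ un sz; rewrite /= rcons_path pth closing.
Qed.

End GraphFacts.

Section Corona.
Variables (T : finType) (e : rel T).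

Definition corona_frame (Q : {set T}) (f : T -> T) : Prop :=
  [/\ {in Q, forall x, ~~ leafH e x},
      {in Q, forall x, [/\ f x \notin Q, ~~ leafH e (f x) & e x (f x)]},
      {in Q &, injective f}
    & forall x v, x \in Q -> e x v -> v != f x -> v \in Q].

Definition corona_tree (VQ : {set T}) (eQ : rel T) : Prop :=
  [/\ is_tree VQ eQ, subrel eQ e,
      (forall x, x \in VQ ->
         ~~ is_leaf [set: T] e x && ~~ is_support [set: T] e x),
      (exists f : T -> T,
         {in VQ &, injective f} /\
         forall x, x \in VQ ->
           [/\ f x \notin VQ, ~~ is_leaf [set: T] e (f x) & e x (f x)]) &
      (forall x, x \in VQ -> deg [set: T] e x = (deg VQ eQ x).+1)].

End Corona.

Section Construction.
Variables (T : finType) (e : rel T) (alpha : T -> nat).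
Hypotheses (esym : symmetric e) (eirr : irreflexive e).
Hypothesis alpha_gt0 : forall v, leafH e v -> 0 < alpha v.
Hypothesis nbr : forall v, exists u, e v u.
Variables (Q : {set T}) (f : T -> T).
Hypothesis frame : corona_frame e Q f.

Notation leaf := (leafH e).
Notation G := (S2e e alpha).
Notation V := (S2V e alpha).

Lemma frame_nonleaf x : x \in Q -> ~~ leaf x.
Proof. by case: frame => + _ _ _; apply. Qed.

Lemma frame_f x : x \in Q -> [/\ f x \notin Q, ~~ leaf (f x) & e x (f x)].
Proof. by case: frame => _ + _ _; apply. Qed.

Lemma frame_inj : {in Q &, injective f}.
Proof. by case: frame. Qed.

Lemma frame_nbr x v : x \in Q -> e x v -> v \notin Q -> v = f x.
Proof.
case: frame => _ _ _ closed xQ xv vQ; apply/eqP; apply: contraNT vQ.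
exact: closed.
Qed.

Lemma leaf_notin_frame v : leaf v -> v \notin Q.
Proof. by move=> lv; apply: contraL lv; apply: frame_nonleaf. Qed.

Lemma frame_nbr_in x : x \in Q -> exists2 y, y \in Q & e x y.
Proof.
move=> xQ; have [y xy yf] := nonleaf_other_nbr nbr (f x) (frame_nonleaf xQ).
exists y => //; apply: contraT => yQ.
by rewrite (frame_nbr xQ xy yQ) eqxx in yf.
Qed.

(* A neighbour [y] of [v] inside [Q] satisfies [f y = v] when [v \notin Q], so by
   injectivity of [f] at most one neighbour of [v] lies in [Q]. *)
Lemma nonleaf_nbr_out v : ~~ leaf v -> exists2 y, e v y & y \notin Q.
Proof.
move=> nl; case: (boolP (v \in Q)) => vQ.
  by have [fQ _ vf] := frame_f vQ; exists (f v).
have [u vu] := nbr v; have [w vw wu] := nonleaf_other_nbr nbr u nl.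
case: (boolP (u \in Q)) => uQ; last by exists u.
case: (boolP (w \in Q)) => wQ; last by exists w.
have vu' : e u v by rewrite esym.
have vw' : e w v by rewrite esym.
have fuw := etrans (Logic.eq_sym (frame_nbr uQ vu' vQ)) (frame_nbr wQ vw' vQ).
by rewrite (frame_inj uQ wQ fuw) eqxx in wu.
Qed.

Definition frame_P (x : S2T alpha) : bool :=
  match x with
  | inl (inl v) => v \in Q
  | inl (inr (_, v)) => v \notin Q
  | inr _ => false
  end.

Definition frame_mate (x : S2T alpha) : S2T alpha :=
  match x with
  | inl (inl v) => Subd alpha v (f v)
  | inl (inr (u, v)) => if u \in Q then Orig alpha u else Subd alpha v u
  | inr _ => x
  end.

Definition frame_Pset := [set x in V | frame_P x].
Definition frame_Dset := [set x in V | ~~ frame_P x].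

Variable e' : rel (S2T alpha).
Hypothesis e'_frame : forall a c, G a c -> frame_P a || frame_P c -> e' a c.

Lemma e'_frame_P a c : G a c -> frame_P c -> e' a c.
Proof. by move=> ac cP; apply: e'_frame; rewrite // cP orbT. Qed.

Lemma frame_D_dominating : dominating V e' frame_Dset.
Proof.
split; first by apply/subsetP => x; rewrite inE => /andP [].
move=> x xV; rewrite inE xV negbK.
case: x xV => [[v|[u v]]|[v i]] //; rewrite !inE /=.
  move=> nl vQ; have [y yQ vy] := frame_nbr_in vQ.
  exists (Subd alpha v y); first by rewrite !inE /= vy yQ.
  by apply: e'_frame; [exact: S2e_OrigSubd | rewrite /= vQ].
move=> uv vQ; have e'uv y : G (Subd alpha u v) y -> e' (Subd alpha u v) y.
  by move=> uvy; apply: e'_frame; rewrite //= vQ.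
case: (boolP (u \in Q)) => uQ.
  exists (Subd alpha v u); first by rewrite !inE /= esym uv uQ.
  exact/e'uv/S2e_SubdSubd.
case: (boolP (leaf u)) => lu.
  exists (Copy alpha u (Ordinal (alpha_gt0 lu))); first by rewrite !inE /= lu.
  exact/e'uv/S2e_SubdCopy.
exists (Orig alpha u); first by rewrite !inE /= lu.
by apply/e'uv; rewrite S2e_sym; apply: S2e_OrigSubd.
Qed.

Lemma frame_P_dominating : dominating V e' frame_Pset.
Proof.
split; first by apply/subsetP => x; rewrite inE => /andP [].
move=> x xV; rewrite inE xV /=.
case: x xV => [[v|[u v]]|[v i]]; rewrite !inE /=.
- move=> nl vQ; have [y vy yQ] := nonleaf_nbr_out nl.
  exists (Subd alpha v y); first by rewrite !inE /= vy yQ.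
  by apply: e'_frame_P; [exact: S2e_OrigSubd | rewrite /= yQ].
- rewrite negbK => uv vQ; case: (boolP (u \in Q)) => uQ.
    exists (Orig alpha u); first by rewrite !inE /= uQ frame_nonleaf.
    by apply: e'_frame_P; rewrite // S2e_sym S2e_OrigSubd ?frame_nonleaf.
  exists (Subd alpha v u); first by rewrite !inE /= esym uv uQ.
  by apply: e'_frame_P; rewrite ?S2e_SubdSubd /=.
- move=> lv _; have [u vu] := nbr v.
  have uQ : u \notin Q.
    apply/negP => uQ; have [_ nlf _] := frame_f uQ.
    have vf : v = f u by apply: frame_nbr uQ _ (leaf_notin_frame lv); rewrite esym.
    by rewrite -vf lv in nlf.
  exists (Subd alpha v u); first by rewrite !inE /= vu uQ.
  by apply: e'_frame_P; rewrite /= ?uQ // S2e_sym S2e_SubdCopy.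
Qed.

Lemma frame_mateP x : x \in frame_Pset ->
  [/\ frame_mate x \in frame_Pset, frame_mate x != x,
      frame_mate (frame_mate x) = x & e' x (frame_mate x)].
Proof.
rewrite inE; case: x => [[v|[u v]]|[v i]] /andP [xV xP] //; rewrite /= in xP.
- rewrite S2V_Orig in xV; have [fQ _ vf] := frame_f xP.
  have -> : frame_mate (Orig alpha v) = Subd alpha v (f v) by [].
  split.
  + by rewrite !inE /= vf fQ.
  + by [].
  + by rewrite /frame_mate xP.
  + by apply: e'_frame_P; [apply: S2e_OrigSubd | rewrite /= fQ].
- rewrite S2V_Subd in xV; case: (boolP (u \in Q)) => uQ.
    have vf := frame_nbr uQ xV xP.
    have -> : frame_mate (Subd alpha u v) = Orig alpha u by rewrite /frame_mate uQ.
    split.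
    + by rewrite !inE /= uQ frame_nonleaf.
    + by [].
    + by rewrite /= -vf.
    + by apply: e'_frame_P; [rewrite S2e_sym S2e_OrigSubd ?frame_nonleaf | exact: uQ].
  have -> : frame_mate (Subd alpha u v) = Subd alpha v u.
    by rewrite /frame_mate (negbTE uQ).
  split.
  + by rewrite !inE /= esym xV uQ.
  + by apply/eqP => -[uv]; rewrite uv eirr in xV.
  + by rewrite /frame_mate (negbTE xP).
  + by apply: e'_frame_P; rewrite ?S2e_SubdSubd.
Qed.

Lemma corona_frame_DPDP : DPDP V e'.
Proof.
exists frame_Dset, frame_Pset; split.
- by apply/setP => x; rewrite !inE; case: (frame_P x); rewrite /= ?andbT ?andbF.
- by apply/setP => x; rewrite !inE; case: (frame_P x); rewrite /= ?andbT ?andbF ?orbF.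
- exact: frame_D_dominating.
- by split; [exact: frame_P_dominating | exists frame_mate; apply: frame_mateP].
Qed.

End Construction.

Section ProperSubgraph.
Variables (T : finType) (e : rel T) (alpha : T -> nat).
Hypothesis esym : symmetric e.
Hypothesis alpha_gt0 : forall v, leafH e v -> 0 < alpha v.

Notation leaf := (leafH e).
Notation G := (S2e e alpha).
Notation V := (S2V e alpha).

Variable e' : rel (S2T alpha).
Hypotheses (e'_sub : subrel e' G) (e'_sym : symmetric e').
Variables (D P : {set S2T alpha}) (m : S2T alpha -> S2T alpha).
Hypotheses (DP0 : D :&: P = set0) (DPV : D :|: P = V).
Hypothesis D_dom : forall x, x \in V -> x \notin D -> exists2 y, y \in D & e' x y.
Hypothesis P_dom : forall x, x \in V -> x \notin P -> exists2 y, y \in P & e' x y.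
Hypothesis m_match :
  forall x, x \in P -> [/\ m x \in P, m x != x, m (m x) = x & e' x (m x)].

Lemma P_notin_D x : x \in P -> x \notin D.
Proof. by move=> xP; apply/negP => xD; have := in_set0 x; rewrite -DP0 inE xD xP. Qed.

Lemma D_notin_P x : x \in D -> x \notin P.
Proof. by apply: contraL; apply: P_notin_D. Qed.

Lemma notin_P_D x : x \in V -> x \notin P -> x \in D.
Proof. by rewrite -DPV inE => /orP [// | ->]. Qed.

Lemma P_nbr x : x \in V -> exists2 y, y \in P & e' x y.
Proof.
move=> xV; case: (boolP (x \in P)) => xP; last exact: P_dom.
by have [mP _ _ xm] := m_match xP; exists (m x).
Qed.

Lemma D_nbr x : x \in P -> exists2 y, y \in D & e' x y.
Proof. by move=> xP; apply: D_dom (P_notin_D xP); rewrite -DPV inE xP orbT. Qed.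

Lemma Copy_in_D v i : leaf v -> Copy alpha v i \in D.
Proof.
move=> lv; apply: notin_P_D; first by rewrite !inE.
apply/negP => xP; have [mP _ _ /e'_sub xm] := m_match xP.
have [y yD /e'_sub xy] := D_nbr xP.
have [_ [u vu mu]] := S2e_CopyP xm; have [_ [w vw yw]] := S2e_CopyP xy.
by move: (D_notin_P yD); rewrite yw -(leaf_nbr_uniq lv vu vw) -mu mP.
Qed.

Lemma Subd_leaf_in_P v u : leaf v -> e v u -> Subd alpha v u \in P.
Proof.
move=> lv vu; have cV : Copy alpha v (Ordinal (alpha_gt0 lv)) \in V by rewrite !inE.
have [y yP /e'_sub /S2e_CopyP [_ [w vw yw]]] := P_nbr cV.
by rewrite (leaf_nbr_uniq lv vu vw) -yw.
Qed.

Definition origP : {set T} := [set x | Orig alpha x \in P].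

Definition partner (x : T) : T :=
  if m (Orig alpha x) is inl (inr (_, w)) then w else x.

Lemma origP_mate x :
  x \in origP ->
  [/\ m (Orig alpha x) = Subd alpha x (partner x), e x (partner x) & ~~ leaf x].
Proof.
rewrite inE => xP; have [_ _ _ /e'_sub xm] := m_match xP.
by have [nl [v xv mv]] := S2e_OrigP xm; rewrite /partner mv.
Qed.

Lemma partner_nonleaf x : x \in origP -> ~~ leaf (partner x).
Proof.
move=> xS; have [mx xf nl] := origP_mate xS.
have xP : Orig alpha x \in P by rewrite inE in xS.
have [mP _ _ _] := m_match xP; rewrite mx in mP.
have [y yD /e'_sub xy] := D_nbr mP.
have [_ [yf|[yx _]|[lx _]]] := S2e_SubdP esym xy; last by rewrite lx in nl.
  by apply: contraL yD => lf; rewrite yf P_notin_D // Subd_leaf_in_P // esym.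
by move: (D_notin_P yD); rewrite yx xP.
Qed.

Lemma origP_closed x v : x \in origP -> e x v -> v != partner x -> v \in origP.
Proof.
move=> xS xv vf; have [mx _ nl] := origP_mate xS.
have xP : Orig alpha x \in P by rewrite inE in xS.
have xvD : Subd alpha x v \in D.
  apply: notin_P_D; first by rewrite !inE.
  apply/negP => xvP; have [mP _ mm /e'_sub xm] := m_match xvP.
  have [_ [my|[my _]|[lx _]]] := S2e_SubdP esym xm; last by rewrite lx in nl.
    have [y yD /e'_sub xy] := D_nbr xvP.
    have [_ [yv|[yx _]|[lx _]]] := S2e_SubdP esym xy; last by rewrite lx in nl.
      by move: (D_notin_P yD); rewrite yv -my mP.
    by move: (D_notin_P yD); rewrite yx xP.
  by move: mm; rewrite my mx => -[fv]; rewrite fv eqxx in vf.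
have vxV : Subd alpha v x \in V by rewrite !inE /= esym.
have [y yP /e'_sub vy] := P_nbr vxV.
have [_ [yx|[yv _]|[lv [i yc]]]] := S2e_SubdP esym vy.
- by move: (D_notin_P xvD); rewrite -yx yP.
- by rewrite inE -yv.
- by move: (D_notin_P (Copy_in_D i lv)); rewrite -yc yP.
Qed.

Lemma e'_CopySubd v i u : leaf v -> e v u -> e' (Copy alpha v i) (Subd alpha v u).
Proof.
move=> lv vu; have cV : Copy alpha v i \in V by rewrite !inE.
have [y _ xy] := P_nbr cV; have [_ [w vw yw]] := S2e_CopyP (e'_sub xy).
by rewrite (leaf_nbr_uniq lv vu vw) -yw.
Qed.

Section EmptyOrigP.
Hypothesis origP0 : origP = set0.

Lemma Orig_notin_P x : Orig alpha x \notin P.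
Proof. by have := in_set0 x; rewrite -origP0 inE => ->. Qed.

Lemma P_Subd_mate u v : Subd alpha u v \in P -> m (Subd alpha u v) = Subd alpha v u.
Proof.
move=> xP; have [mP _ _ /e'_sub xm] := m_match xP.
have [_ [// | [mu _] | [lu [i mc]]]] := S2e_SubdP esym xm.
  by rewrite mu (negbTE (Orig_notin_P u)) in mP.
by rewrite mc (negbTE (D_notin_P (Copy_in_D i lu))) in mP.
Qed.

Lemma Subd_in_P u v : e u v -> Subd alpha u v \in P.
Proof.
move=> uv; apply: contraT => xP; have xV : Subd alpha u v \in V by rewrite !inE.
have [y yP /e'_sub xy] := P_nbr xV.
have [_ [yv | [yu _] | [lu [i yc]]]] := S2e_SubdP esym xy.
- by have [mP _ _ _] := m_match yP; rewrite yv P_Subd_mate -?yv // (negbTE xP) in mP.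
- by rewrite yu (negbTE (Orig_notin_P u)) in yP.
- by rewrite yc (negbTE (D_notin_P (Copy_in_D i lu))) in yP.
Qed.

Lemma e'_SubdOrig x v : ~~ leaf x -> e x v -> e' (Subd alpha x v) (Orig alpha x).
Proof.
move=> nl xv; have [y yD xy] := D_nbr (Subd_in_P xv).
have [_ [yv | [yx _] | [lx _]]] := S2e_SubdP esym (e'_sub xy).
- by move: (D_notin_P yD); rewrite yv Subd_in_P // esym.
- by rewrite -yx.
- by rewrite lx in nl.
Qed.

Lemma S2e_sub_e' : subrel G e'.
Proof.
move=> a c; case: a => [[x|[u v]]|[v i]] ac.
- by have [nl [w xw ->]] := S2e_OrigP ac; rewrite e'_sym e'_SubdOrig.
- have [uv [-> | [-> nl] | [lu [j ->]]]] := S2e_SubdP esym ac.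
  + by have [_ _ _] := m_match (Subd_in_P uv); rewrite P_Subd_mate // Subd_in_P.
  + exact: e'_SubdOrig.
  + by rewrite e'_sym e'_CopySubd.
- by have [lv [u vu ->]] := S2e_CopyP ac; apply: e'_CopySubd.
Qed.

End EmptyOrigP.

Lemma origP_neq0 : (exists a c, G a c && ~~ e' a c) -> origP != set0.
Proof. by move=> [a [c /andP [ac]]]; apply: contra => /eqP S0; rewrite S2e_sub_e'. Qed.

End ProperSubgraph.

Definition induced (T : finType) (Q : {set T}) (e : rel T) : rel T :=
  [rel a b | [&& e a b, a \in Q & b \in Q]].

Section Component.
Variables (T : finType) (e : rel T).
Hypotheses (esym : symmetric e) (eirr : irreflexive e) (eacyc : acyclic e).

Notation leaf := (leafH e).

Variables (S : {set T}) (f : T -> T).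
Hypotheses (S_nonleaf : forall x, x \in S -> ~~ leaf x)
  (S_f : forall x, x \in S -> e x (f x) /\ ~~ leaf (f x))
  (S_closed : forall x v, x \in S -> e x v -> v != f x -> v \in S)
  (S_ne : S != set0).

Definition branch : rel T := fun z w => [&& z \in S, e z w & w != f z].

Definition branch_closed (C : {set T}) : bool :=
  [&& C != set0, C \subset S & [forall z in C, forall w, branch z w ==> (w \in C)]].

Lemma branch_closedS : branch_closed S.
Proof.
rewrite /branch_closed S_ne subxx; apply/forall_inP => z zS.
apply/forallP => w; apply/implyP; rewrite /branch => /and3P [_ zw wf].
exact: S_closed zS zw wf.
Qed.

Lemma branch_closed_connect C x y :
  branch_closed C -> x \in C -> connect branch x y -> y \in C.
Proof.
case/and3P => _ _ /forall_inP closed xC /connectP [p pth ->] {y}.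
elim: p x xC pth => [|z p IHp] x xC //= /andP [xz pth].
by apply: IHp pth; move/forallP: (closed x xC) => /(_ z) /implyP; apply.
Qed.

Lemma branch_closed_sub C : branch_closed C -> C \subset S.
Proof. by case/and3P. Qed.

(* A smallest branch-closed set is strongly connected: the part of it reachable
   from any of its vertices is branch-closed too. *)
Lemma strongly_connected_branch_closed :
  exists2 Q, branch_closed Q & {in Q &, forall x y, connect branch x y}.
Proof.
case: (@arg_minnP _ S branch_closed (fun C => #|C|) branch_closedS) => Q Qcl Qmin.
exists Q => // x y xQ yQ; pose C := [set z | connect branch x z].
have Ccl : branch_closed C.
  apply/and3P; split.
  - by apply/set0Pn; exists x; rewrite inE connect0.
  - apply/subsetP => z; rewrite inE => /(branch_closed_connect Qcl xQ).
    exact/subsetP/branch_closed_sub.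
  - apply/forall_inP => z; rewrite inE => xz; apply/forallP => w; apply/implyP => zw.
    by rewrite inE (connect_trans xz) ?connect1.
have CQ : C \subset Q.
  by apply/subsetP => z; rewrite inE; apply: branch_closed_connect.
have /eqP CeqQ : C == Q by rewrite eqEcard CQ Qmin.
by move: yQ; rewrite -CeqQ inE.
Qed.

Section MinimalComponent.
Variable Q : {set T}.
Hypotheses (Qcl : branch_closed Q) (Qconn : {in Q &, forall x y, connect branch x y}).

Lemma Q_sub_S x : x \in Q -> x \in S.
Proof. exact/subsetP/branch_closed_sub. Qed.

Lemma Q_closed x y : x \in Q -> e x y -> y != f x -> y \in Q.
Proof.
move=> xQ xy yf; apply: (branch_closed_connect Qcl xQ); apply: connect1.
by rewrite /branch Q_sub_S ?xy.
Qed.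

Lemma branch_path_induced x p :
  x \in Q -> path branch x p -> path (induced Q e) x p && all (mem Q) p.
Proof.
elim: p x => [|z p IHp] x xQ //= /andP [/and3P [_ xz zf] pth].
have zQ := Q_closed xQ xz zf; have /andP [zpth allp] := IHp z zQ pth.
have xzQ : induced Q e x z by rewrite /induced /= xz xQ zQ.
by rewrite xzQ zpth zQ allp.
Qed.

Lemma f_notin_Q x : x \in Q -> f x \notin Q.
Proof.
move=> xQ; apply/negP => fQ; have [xf _] := S_f (Q_sub_S xQ).
case/connectP: (Qconn xQ fQ) => p pth; case: (shortenP pth) => p' pth' uniq' _ plast.
have size' : 1 < size p'.
  case: p' pth' plast {uniq'} => [|z [|z' p'']] //=.
    by move=> _ fx; rewrite fx eirr in xf.
  by rewrite andbT /branch => /and3P [_ _ zf] fz; rewrite fz eqxx in zf.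
have epth : path e x p' by apply: sub_path pth' => a b /and3P [].
by have := acyclic_closing_path eacyc epth uniq' size'; rewrite -plast esym xf.
Qed.

Lemma f_inj_Q : {in Q &, injective f}.
Proof.
move=> a b aQ bQ fab; apply/eqP/negPn/negP => ab.
have [af _] := S_f (Q_sub_S aQ); have [bf _] := S_f (Q_sub_S bQ).
case/connectP: (Qconn aQ bQ) => p pth; case: (shortenP pth) => p' pth' uniq' _ plast.
have /andP [ipth allQ] := branch_path_induced aQ pth'.
have epth : path e a (rcons p' (f a)).
  by rewrite rcons_path -plast fab bf (sub_path _ ipth) // => u w /and3P [].
have fa_out : f a \notin a :: p'.
  have faQ := f_notin_Q aQ; rewrite inE negb_or; apply/andP; split.
    by apply: contraNneq faQ => ->.
  by apply: contra faQ => /(allP allQ).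
have euniq : uniq (a :: rcons p' (f a)) by rewrite -rcons_cons rcons_uniq fa_out.
have esize : 1 < size (rcons p' (f a)).
  rewrite size_rcons; case: p' {pth' uniq' ipth allQ epth fa_out euniq} plast => //= ba.
  by rewrite ba eqxx in ab.
by have := acyclic_closing_path eacyc epth euniq esize; rewrite last_rcons esym af.
Qed.

Lemma deg_Q x : x \in Q -> deg [set: T] e x = (deg Q (induced Q e) x).+1.
Proof.
move=> xQ; rewrite /deg; have [xf _] := S_f (Q_sub_S xQ).
have -> : [set y in [set: T] | e x y] = f x |: [set y in Q | induced Q e x y].
  apply/setP => y; rewrite !inE /=.
  case: (eqVneq y (f x)) => [->|yf] /=; first by rewrite xf.
  by rewrite /induced /= xQ; case xy: (e x y); rewrite ?andbF // (Q_closed xQ xy yf).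
by rewrite cardsU1 inE (negbTE (f_notin_Q xQ)).
Qed.

Lemma is_tree_Q : is_tree Q (induced Q e).
Proof.
split.
- split; first by move=> a b; rewrite /induced /= esym (andbC (a \in Q)).
    by move=> a; rewrite /induced /= eirr.
  by move=> a b /and3P [_ -> ->].
- split; first by case/and3P: Qcl.
  move=> a b aQ bQ; case/connectP: (Qconn aQ bQ) => p pth ->.
  by apply/connectP; exists p; case/andP: (branch_path_induced aQ pth).
- by move=> s us ss; apply: contra (eacyc us ss); apply: sub_cycle => a b /and3P [].
Qed.

Lemma corona_tree_Q : corona_tree e Q (induced Q e).
Proof.
split; [exact: is_tree_Q | by move=> a b /and3P [] | | | exact: deg_Q].
- move=> x xQ; have xS := Q_sub_S xQ; rewrite S_nonleaf //=.
  apply/negP => /andP [_ /existsP [y /andP [xy ly]]].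
  case: (eqVneq y (f x)) => [yf | yf].
    by have [_] := S_f xS; rewrite -yf /leafH ly.
  by have := S_nonleaf (Q_sub_S (Q_closed xQ xy yf)); rewrite /leafH ly.
- exists f; split; first exact: f_inj_Q.
  by move=> x xQ; have [xf nlf] := S_f (Q_sub_S xQ); split; rewrite ?f_notin_Q.
Qed.

End MinimalComponent.

Lemma exists_corona_tree : exists VQ eQ, corona_tree e VQ eQ.
Proof.
have [Q Qcl Qconn] := strongly_connected_branch_closed.
by exists Q, (induced Q e); apply: corona_tree_Q.
Qed.

End Component.

Section Characterization.
Variables (T : finType) (e : rel T) (alpha : T -> nat).
Hypotheses (esym : symmetric e) (eirr : irreflexive e) (eacyc : acyclic e).
Hypothesis alpha_gt0 : forall v, leafH e v -> 0 < alpha v.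
Hypothesis nbr : forall v, exists u, e v u.

Notation G := (S2e e alpha).
Notation V := (S2V e alpha).

Lemma S2_DPDP : DPDP V G.
Proof.
have frame0 : corona_frame e set0 id by split=> // x; rewrite inE.
by apply: (corona_frame_DPDP esym eirr alpha_gt0 nbr frame0) => a c.
Qed.

(* The degree condition says that the neighbours of [x] in [eQ], all lying in [VQ],
   are exactly the neighbours of [x] other than [f x]. *)
Lemma corona_tree_frame VQ eQ : corona_tree e VQ eQ -> exists f, corona_frame e VQ f.
Proof.
case=> _ subQ nls [f [finj fP]] degQ; exists f; split => //.
  by move=> x /nls /andP [].
move=> x v xQ xv vf; have [fQ _ xf] := fP x xQ.
pose N := [set y in [set: T] | e x y]; pose NQ := [set y in VQ | eQ x y].
have NQsub : NQ \subset N :\ f x.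
  apply/subsetP => y; rewrite !inE => /andP [yQ xy]; rewrite (subQ _ _ xy) /= andbT.
  by apply/eqP => yf; rewrite -yf yQ in fQ.
have cardN : #|N :\ f x| = #|NQ|.
  have := cardsD1 (f x) N; rewrite !inE xf /= => cardD.
  by have := degQ x xQ; rewrite /deg -/N -/NQ cardD add1n => -[].
have /eqP NQ_eq : NQ == N :\ f x by rewrite eqEcard NQsub cardN leqnn.
have : v \in N :\ f x by rewrite !inE vf xv.
by rewrite -NQ_eq inE => /andP [].
Qed.

Lemma not_minimal_of_frame Q f :
  corona_frame e Q f -> Q != set0 -> ~ minimal_DPDP V G.
Proof.
move=> frame /set0Pn [x0 x0Q] [_ minimal].
have [y0 y0Q x0y0] := frame_nbr_in nbr frame x0Q.
pose cut : rel (S2T alpha) := fun a c =>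
  ((a == Subd alpha x0 y0) && (c == Subd alpha y0 x0)) ||
  ((a == Subd alpha y0 x0) && (c == Subd alpha x0 y0)).
pose e' : rel (S2T alpha) := fun a c => G a c && ~~ cut a c.
apply: (minimal e').
- move=> a c; rewrite /e' /cut S2e_sym orbC.
  by congr (_ && ~~ (_ || _)); apply: andbC.
- by move=> a c /andP [].
- exists (Subd alpha x0 y0), (Subd alpha y0 x0).
  by rewrite /e' S2e_SubdSubd // /cut !eqxx.
- apply: (corona_frame_DPDP esym eirr alpha_gt0 nbr frame) => a c ac.
  rewrite /e' ac; apply: contraTN => /orP [] /andP [/eqP -> /eqP ->] /=.
  all: by rewrite x0Q y0Q.
Qed.

Lemma corona_tree_of_proper_DPDP e' :
  symmetric e' -> subrel e' G -> (exists a c, G a c && ~~ e' a c) -> DPDP V e' ->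
  exists VQ eQ, corona_tree e VQ eQ.
Proof.
move=> e'sym e'sub proper [D [P [DP0 DPV [_ Ddom] [[_ Pdom] [m mP]]]]].
apply: (exists_corona_tree esym eirr eacyc (S := origP P) (f := partner m)).
- by move=> x /(origP_mate e'sub mP) [].
- move=> x xS; have [_ xf _] := origP_mate e'sub mP xS.
  by split; last exact: (partner_nonleaf esym alpha_gt0 e'sub DP0 DPV Ddom Pdom mP).
- exact: (origP_closed esym e'sub DP0 DPV Ddom Pdom mP).
- exact: (origP_neq0 esym e'sub e'sym DP0 DPV Ddom Pdom mP).
Qed.

End Characterization.

Theorem corollary7p4 (T : finType) (e : rel T) (alpha : T -> nat) :
  is_tree [set: T] e -> 2 <= #|T| ->
  (forall v, is_leaf [set: T] e v -> 0 < alpha v) ->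
  DPDP (S2V e alpha) (S2e e alpha) /\
  (~ minimal_DPDP (S2V e alpha) (S2e e alpha) <->
   exists (VQ : {set T}) (eQ : rel T),
     [/\ is_tree VQ eQ, subrel eQ e,
         (forall x, x \in VQ ->
            ~~ is_leaf [set: T] e x && ~~ is_support [set: T] e x),
         (exists f : T -> T,
            {in VQ &, injective f} /\
            forall x, x \in VQ ->
              [/\ f x \notin VQ, ~~ is_leaf [set: T] e (f x) & e x (f x)]) &
         (forall x, x \in VQ -> deg [set: T] e x = (deg VQ eQ x).+1)]).
Proof.
move=> tree card alpha_gt0; have [[esym eirr _] _ eacyc] := tree.
have nbr := tree_nbr tree card.
have dpdp := S2_DPDP esym eirr alpha_gt0 nbr.
split=> //; split.
- move=> not_minimal; apply: NNPP => no_corona; apply: not_minimal; split=> //.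
  move=> e' e'sym e'sub proper e'dpdp; apply: no_corona.
  exact: (corona_tree_of_proper_DPDP esym eirr eacyc alpha_gt0 e'sym e'sub proper
            e'dpdp).
- case=> VQ [eQ coronaQ]; have [f frame] := corona_tree_frame coronaQ.
  case: coronaQ => [[_ [VQ0 _] _]] _ _ _ _.
  exact: (not_minimal_of_frame esym eirr alpha_gt0 nbr frame VQ0).
Qed.
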